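(* Let $G$ be a profinite group, written as the inverse limit $G = \varprojlim G_i$ of its finite quotients $G_i$, and let $H$ be a finite discrete abelian group. Then $H^2_{\mathrm{ts}}(G,H) = \varprojlim H^2_{\mathrm{ts}}(G_i,H)$.
   Context: A profinite group is a topological group isomorphic to an inverse limit of finite groups, with the inverse limit topology. For a topological group $G$ and an abelian topological group $H$, the topo-symmetric cohomology is $H^2_{\mathrm{ts}}(G,H) = Z^2_{\mathrm{ts}}(G,H)/B^2_{\mathrm{ts}}(G,H)$, where $Z^2_{\mathrm{ts}}(G,H)$ is the set of continuous 2-cocycles $c \in Z^2(G,H)$ satisfying $c(g,h) = c(h,g)$ for all $g,h \in G$, and $B^2_{\mathrm{ts}}(G,H)$ the coboundaries among them; it is a subgroup of the continuous cohomology group $H^2(G,H)$. *)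

From HB Require Import structures.
From mathcomp Require Import all_boot all_algebra.
From mathcomp Require Import boolp classical_sets topology.

Set Implicit Arguments.
Unset Strict Implicit.
Unset Printing Implicit Defensive.

Import GRing.Theory.
Local Open Scope classical_set_scope.
Local Open Scope ring_scope.

Section TopGroup.
Variables (T : topologicalType) (mul : T -> T -> T) (inv : T -> T) (e : T).

Definition is_topgroup : Prop :=
  (forall x y z, mul x (mul y z) = mul (mul x y) z) /\
  (forall x, mul e x = x) /\ (forall x, mul x e = x) /\
  (forall x, mul (inv x) x = e) /\ (forall x, mul x (inv x) = e) /\
  continuous (fun p : T * T => mul p.1 p.2) /\ continuous inv.

Definition open_normal_fi (N : set T) : Prop :=
  N e /\ (forall x y, N x -> N y -> N (mul x y)) /\ (forall x, N x -> N (inv x)) /\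
  (forall g n, N n -> N (mul (mul g n) (inv g))) /\ open N /\
  (exists s : seq T, forall g, exists x, x \in s /\ N (mul (inv x) g)).

(* Profinite: the canonical map G -> lim_{N} G/N (N ranging over the open
   normal subgroups of finite index) is an isomorphism of topological groups:
   injective, surjective, and a homeomorphism (the N form a basis at e). *)
Definition profinite : Prop :=
  [/\ is_topgroup,
      (forall x, (forall N, open_normal_fi N -> N x) -> x = e),
      (* surjectivity: every compatible family of cosets is hit *)
      (forall xs : set T -> T,
         (forall N M, open_normal_fi N -> open_normal_fi M -> M `<=` N ->
            N (mul (inv (xs N)) (xs M))) ->
         exists x, forall N, open_normal_fi N -> N (mul (inv x) (xs N))) &
      (forall U : set T, open U -> U e -> exists N, open_normal_fi N /\ N `<=` U)].

Variable H : finZmodType.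

(* continuity into the finite discrete group H = local constancy *)
Definition cont1 (f : T -> H) : Prop := forall a : H, open [set g | f g = a].
Definition cont2 (c : T -> T -> H) : Prop :=
  forall a : H, open [set p : T * T | c p.1 p.2 = a].

(* inhomogeneous cochains, trivial action of G on H *)
Definition is_cocycle2 (c : T -> T -> H) : Prop :=
  forall g h k, c h k - c (mul g h) k + c g (mul h k) - c g h = 0.
Definition is_symmetric2 (c : T -> T -> H) : Prop := forall g h, c g h = c h g.
Definition cobound1 (f : T -> H) : T -> T -> H :=
  fun g h => f h - f (mul g h) + f g.

Definition Z2ts (c : T -> T -> H) : Prop :=
  [/\ cont2 c, is_cocycle2 c & is_symmetric2 c].
Definition B2ts (c : T -> T -> H) : Prop :=
  Z2ts c /\ exists f, cont1 f /\ forall g h, c g h = cobound1 f g h.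

(* Cochains on the finite quotient G/N, identified with cochains on G
   constant on N-cosets (the identification is precisely inflation). *)
Definition Ninv1 (N : set T) (f : T -> H) : Prop :=
  forall g n, N n -> f (mul g n) = f g.
Definition Ninv2 (N : set T) (c : T -> T -> H) : Prop :=
  forall g h n m, N n -> N m -> c (mul g n) (mul h m) = c g h.

Definition Z2ts_quot (N : set T) (c : T -> T -> H) : Prop :=
  [/\ Ninv2 N c, is_cocycle2 c & is_symmetric2 c].
Definition B2ts_quot (N : set T) (c : T -> T -> H) : Prop :=
  Z2ts_quot N c /\ exists f, Ninv1 N f /\ forall g h, c g h = cobound1 f g h.

(* The canonical (inflation) map  colim_N H^2_ts(G/N,H) -> H^2_ts(G,H)
   is an isomorphism (it is a well-defined homomorphism; bijectivity
   unfolds to the two conditions below). *)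
Definition H2ts_is_limit_of_quotients : Prop :=
  (forall c, Z2ts c -> exists N, open_normal_fi N /\
       exists c', Z2ts_quot N c' /\ B2ts (fun g h => c g h - c' g h)) /\
  (forall N c', open_normal_fi N -> Z2ts_quot N c' -> B2ts c' ->
       exists M, [/\ open_normal_fi M, M `<=` N & B2ts_quot M c']).

End TopGroup.

From HB Require Import structures.
From mathcomp Require Import all_boot all_algebra.
From mathcomp Require Import boolp classical_sets topology.

(* A continuous cochain with values in the finite discrete group H is
   locally constant; since a profinite group is compact and its open normal
   subgroups of finite index form a basis at the identity, it is then
   constant on the cosets of a single such subgroup N, i.e. it is inflated
   from G/N.  Applied to a symmetric cocycle this gives surjectivity of
   inflation from the limit; applied to the 1-cochain bounding a cocycle
   inflated from G/N, it shows that the cocycle already bounds on some G/M,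
   which is injectivity. *)

Set Implicit Arguments.
Unset Strict Implicit.
Unset Printing Implicit Defensive.

Import GRing.Theory.
Local Open Scope classical_set_scope.
Local Open Scope ring_scope.

Lemma ultra_exists_seq (I : eqType) (T : Type) (F : set_system T)
    (A : I -> set T) (s : seq I) :
  UltraFilter F -> F [set y | exists x, x \in s /\ A x y] ->
  exists x, x \in s /\ F (A x).
Proof.
move=> UF; elim: s => [|a s IHs] Fs.
  by have [y [x []]] := filter_ex Fs.
have [FAa|FnAa] := in_ultra_setVsetC (A a) UF.
  by exists a; rewrite mem_head.
have [|x [xs FAx]] := IHs.
  apply: filterS (filterI Fs FnAa) => y [[x [+ Axy]] nAay].
  by rewrite in_cons => /orP[/eqP xa|xs]; [rewrite xa in Axy|exists x].
by exists x; rewrite in_cons xs orbT.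
Qed.

Lemma open_set_cst (U : topologicalType) (P : Prop) : open [set _ : U | P].
Proof.
have [p|np] := pselect P.
  by rewrite (_ : [set _ | P] = setT); [exact: openT|apply/seteqP; split].
by rewrite (_ : [set _ | P] = set0); [exact: open0|apply/seteqP; split].
Qed.

Lemma B2ts0 (T : topologicalType) (mul : T -> T -> T) (H : finZmodType) :
  B2ts mul (fun _ _ => 0 : H).
Proof.
split; first split.
- by move=> a; apply: open_set_cst.
- by move=> g h k; rewrite !subrr addr0 subrr.
- by [].
exists (fun _ => 0); split; first by move=> a; apply: open_set_cst.
by move=> g h; rewrite /cobound1 subrr addr0.
Qed.

Section ProfiniteGroup.
Variables (T : topologicalType) (mul : T -> T -> T) (inv : T -> T) (e : T).
Hypothesis profT : profinite mul inv e.

Local Notation onfi := (open_normal_fi mul inv e).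

Let topT : is_topgroup mul inv e. Proof. by case: profT. Qed.

Lemma mulA x y z : mul x (mul y z) = mul (mul x y) z.
Proof. by case: topT. Qed.

Lemma mul1x x : mul e x = x.
Proof. by case: topT => _ []. Qed.

Lemma mulx1 x : mul x e = x.
Proof. by case: topT => _ [_ []]. Qed.

Lemma mulxV x : mul x (inv x) = e.
Proof. by case: topT => _ [_ [_ [_ []]]]. Qed.

Lemma mul_continuous : continuous (fun p : T * T => mul p.1 p.2).
Proof. by case: topT => _ [_ [_ [_ [_ []]]]]. Qed.

Lemma open_normal_fi_sub (U : set T) :
  open U -> U e -> exists N, onfi N /\ N `<=` U.
Proof. by case: profT => _ _ _; apply. Qed.

Lemma open_normal_fiI N M :
  onfi N -> onfi M -> exists K, onfi K /\ K `<=` N `&` M.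
Proof.
move=> [N1 [_ [_ [_ [oN _]]]]] [M1 [_ [_ [_ [oM _]]]]].
exact: open_normal_fi_sub (openI oN oM) (conj N1 M1).
Qed.

Section Cosets.
Variable N : set T.
Hypotheses (NM : forall x y, N x -> N y -> N (mul x y))
           (NV : forall x, N x -> N (inv x)).

Lemma lcoset_trans x y z :
  N (mul (inv x) y) -> N (mul (inv y) z) -> N (mul (inv x) z).
Proof.
move=> Nxy Nyz; have := NM Nxy Nyz.
by rewrite -mulA (mulA y) mulxV mul1x.
Qed.

Lemma lcoset_common x y z :
  N (mul (inv x) z) -> N (mul (inv y) z) -> N (mul (inv x) y).
Proof.
move=> Nxz Nyz.
have [u zE Nu] : exists2 u, z = mul y u & N u.
  by exists (mul (inv y) z); rewrite // mulA mulxV mul1x.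
have -> : mul (inv x) y = mul (mul (inv x) z) (inv u).
  by rewrite zE -!mulA mulxV mulx1.
exact: NM Nxz (NV Nu).
Qed.

End Cosets.

Lemma nbhs_tube (x : T) (S : set (T * T)) :
  nbhs (x, e) S -> exists V N, [/\ nbhs x V, onfi N &
    forall y m, V y -> N m -> S (y, m)].
Proof.
case=> -[A B] /= [Ax]; rewrite nbhsE => -[O [oO Oe] OB] ABS.
have [N [hN NO]] := open_normal_fi_sub oO Oe.
exists A, N; split=> // y m Ay Nm.
by apply: (ABS (y, m)); split=> //; apply/OB/NO.
Qed.

Lemma nbhs_lcoset (x : T) (U : set T) :
  nbhs x U -> exists N, onfi N /\ [set y | N (mul (inv x) y)] `<=` U.
Proof.
move=> Ux; have : nbhs (x, e) [set p | U (mul p.1 p.2)].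
  by apply: mul_continuous; rewrite /= mulx1.
case/nbhs_tube => V [N [Vx hN VNU]]; exists N; split=> // y Nxy.
have /= := VNU x _ (nbhs_singleton Vx) Nxy.
by rewrite mulA mulxV mul1x.
Qed.

Lemma ultra_lcoset (F : set_system T) N :
  UltraFilter F -> onfi N -> exists x, F [set y | N (mul (inv x) y)].
Proof.
move=> UF [_ [_ [_ [_ [_ [s cover_s]]]]]].
pose coset x := [set y | N (mul (inv x) y)].
have [|x [_ Fx]] := @ultra_exists_seq _ _ F coset s UF.
  by apply: filterS filterT => y _; apply: cover_s.
by exists x.
Qed.

(* An ultrafilter picks one coset of every N; these cosets are compatible,
   so surjectivity of G -> lim G/N yields a limit point. *)
Lemma profinite_compact : compact [set: T].
Proof.
rewrite compact_ultra => F UF _.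
have /choice [r Fr] :
    forall N, exists x, onfi N -> F [set y | N (mul (inv x) y)].
  move=> N; have [hN|nN] := pselect (onfi N); last by exists e => /nN.
  by have [x Fx] := ultra_lcoset UF hN; exists x => _.
have [x xr] : exists x, forall N, onfi N -> N (mul (inv x) (r N)).
  case: profT => _ _ surj _; apply: surj => N M hN hM MN.
  have [z [/= Nz /MN Mz]] := filter_ex (filterI (Fr N hN) (Fr M hM)).
  by have [_ [NM [NV _]]] := hN; exact (lcoset_common NM NV Nz Mz).
exists x; split=> // U /nbhs_lcoset [N [hN NU]].
apply: filterS (Fr N hN) => y Nry; apply: NU.
by have [_ [NM _]] := hN; exact (lcoset_trans NM (xr N hN) Nry).
Qed.

(* Otherwise the sets of y admitting a failure P y m with m in N form a filter
   base; a limit of an ultrafilter refining it contradicts the hypothesis. *)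
Lemma profinite_uniform (P : T -> T -> Prop) :
  (forall x : T, exists V N,
     [/\ nbhs x V, onfi N & forall y m, V y -> N m -> P y m]) ->
  exists N, onfi N /\ forall y m, N m -> P y m.
Proof.
move=> Ploc; apply: contrapT => noN.
pose bad N := [set y | exists m, N m /\ ~ P y m].
have [F [UF badF]] : exists F, UltraFilter F /\ filter_from onfi bad `<=` F.
  apply: ultraFilterLemma; apply: filter_from_proper; last first.
    move=> N hN; apply: contrapT => nbad; apply: noN; exists N; split=> //.
    by move=> y m Nm; apply: contrapT => nP; apply: nbad; exists y, m.
  apply: filter_from_filter.
    by have [N [hN _]] := open_normal_fi_sub openT I; exists N.
  move=> N M hN hM; have [K [hK KNM]] := open_normal_fiI hN hM.
  by exists K => // y [m [Km nP]]; have [Nm Mm] := KNM m Km; split; exists m.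
move: profinite_compact; rewrite compact_ultra => /(_ F UF filterT) [x [_ Fx]].
have [V [N [Vx hN VNP]]] := Ploc x.
have Fbad : F (bad N) by apply: badF; exists N.
have [y [Vy [m [Nm nP]]]] := filter_ex (filterI (Fx V Vx) Fbad).
exact/nP/VNP.
Qed.

Lemma locally_constant_uniform (Y : Type) (phi : T * T -> Y) :
  (forall a, open [set p | phi p = a]) ->
  exists N, onfi N /\ forall y m, N m -> phi (y, m) = phi (y, e).
Proof.
move=> open_fibres; apply: profinite_uniform => x.
have : nbhs (x, e) [set p | phi p = phi (x, e)] by apply: open_nbhs_nbhs.
case/nbhs_tube => V [N [Vx hN VNphi]]; exists V, N; split=> // y m Vy Nm.
by rewrite VNphi // VNphi //; case: hN.
Qed.

Lemma cont1_mul (H : finZmodType) (f : T -> H) :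
  cont1 f -> forall a, open [set p : T * T | f (mul p.1 p.2) = a].
Proof.
move=> f_cont a.
exact (@open_comp _ _ (fun p : T * T => mul p.1 p.2) [set g | f g = a]
  (fun p _ => @mul_continuous p) (f_cont a)).
Qed.

Section Cocycles.
Variables (H : finZmodType) (c : T -> T -> H).
Hypotheses (c_cocycle : is_cocycle2 mul c) (c_sym : is_symmetric2 c).

Lemma cocycle2_x1 g : c g e = c e e.
Proof.
have := c_cocycle g e e; rewrite !mulx1 addrK => /eqP.
by rewrite subr_eq0 => /eqP.
Qed.

(* In the cocycle identity at (g, h, m) the terms c h m and c (g h) m both
   reduce to c e e and cancel. *)
Lemma cocycle2_Ninv2 N :
  (forall g m, N m -> c g m = c g e) -> Ninv2 mul N c.
Proof.
move=> cN; have cR g h m : N m -> c g (mul h m) = c g h.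
  move=> Nm; have := c_cocycle g h m.
  rewrite (cN h) // (cN (mul g h)) // !cocycle2_x1 subrr add0r => /eqP.
  by rewrite subr_eq0 => /eqP.
by move=> g h n m Nn Nm; rewrite cR // c_sym cR // c_sym.
Qed.

End Cocycles.

End ProfiniteGroup.

Theorem mainTheorem9 (T : topologicalType) (mul : T -> T -> T) (inv : T -> T)
  (e : T) (H : finZmodType) :
  profinite mul inv e -> @H2ts_is_limit_of_quotients T mul inv e H.
Proof.
move=> profT; split.
  move=> c [c_cont c_cocycle c_sym].
  have [N [hN /= cN]] := locally_constant_uniform profT c_cont.
  exists N; split=> //; exists c; split.
    by split=> //; exact (cocycle2_Ninv2 profT c_cocycle c_sym cN).
  rewrite (_ : (fun g h => c g h - c g h) = fun _ _ => 0); first exact: B2ts0.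
  by apply/funext => g; apply/funext => h; rewrite subrr.
move=> N c' hN [c'N c'_cocycle c'_sym] [_ [f [f_cont c'E]]].
have [M [hM /= fM]] := locally_constant_uniform profT (cont1_mul profT f_cont).
have [K [hK KMN]] := open_normal_fiI profT hM hN.
exists K; split=> //; first by move=> x /KMN [].
split; first by split=> // g h n m /KMN [_ Nn] /KMN [_ Nm]; apply: c'N.
exists f; split=> // g n /KMN [Mn _].
by rewrite fM // (mulx1 profT).
Qed.
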